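(* Let $G$ be a finite group and $S\in\mathcal F(G)$. (1) If $S'\in\mathcal F(G)$ and $S\sim S'$, then $\pi(S)=\pi(S')$. (2) Let $S'\in\mathcal F(G)$. If either (a) $S,S'\in\mathcal F(\mathsf Z(G))$, or (b) there is $g\in\pi(S)$ with $\pi(S)=gG'$, then $S\sim S'$ if and only if $\pi(S)=\pi(S')$. (3) If $g,h\in G$ with $g\neq h$, then the one-term sequences $g$ and $h$ satisfy $g\not\sim h$; in particular $|G|\le|\mathcal C(\mathcal B(G),\mathcal F(G))|$. (4) If $g\in\mathsf Z(G)$ and $h\in G$, then $g\boldsymbol{\cdot}h\sim gh$ (the latter being the one-term sequence consisting of the product $gh$). (5) $|\pi(S)|=1$ if and only if the subgroup $\langle\mathrm{supp}(S)\rangle$ is abelian.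
   Context: Let $G$ be a finite group written multiplicatively with identity $1_G$; $G'$ is its commutator subgroup and $\mathsf Z(G)$ its center. $\mathcal F(G_0)$ (for $G_0\subset G$) is the free abelian monoid with basis $G_0$; its elements are sequences $S=g_1\boldsymbol{\cdot}\ldots\boldsymbol{\cdot}g_\ell$ (unordered, repetitions allowed; operation $\boldsymbol{\cdot}$ is concatenation, identity the empty sequence $1_{\mathcal F(G)}$), $\mathrm{supp}(S)$ is the set of distinct terms. $\pi(S)=\{g_{\tau(1)}\cdots g_{\tau(\ell)}:\tau\text{ a permutation of }[1,\ell]\}\subset G$, with $\pi(1_{\mathcal F(G)})=\{1_G\}$. $\mathcal B(G)=\{S\in\mathcal F(G):1_G\in\pi(S)\}$. For $S,S'\in\mathcal F(G)$, write $S\sim S'$ if for all $T\in\mathcal F(G)$: $S\boldsymbol{\cdot}T\in\mathcal B(G)\iff S'\boldsymbol{\cdot}T\in\mathcal B(G)$. This is a congruence on $\mathcal F(G)$; $[S]$ denotes the class of $S$, and the class semigroup $\mathcal C(\mathcal B(G),\mathcal F(G))=\{[S]:S\in\mathcal F(G)\}$ is a commutative semigroup written additively, $[S]+[T]=[S\boldsymbol{\cdot}T]$, with zero $[1_{\mathcal F(G)}]$. *)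

From mathcomp Require Import all_boot all_fingroup all_solvable.
Set Implicit Arguments. Unset Strict Implicit. Unset Printing Implicit Defensive.
Import GroupScope.

(* Sequences over G (elements of F(G)) are represented as [seq gT]; the
   monoid F(G) is free abelian, so everything below is invariant under
   permutation of the list. Concatenation S.T is [S ++ T]. *)

Definition seqpi (gT : finGroupType) (S : seq gT) : {set gT} :=
  [set g | has (fun s : seq gT => \prod_(x <- s) x == g) (permutations S)].

Definition inB (gT : finGroupType) (S : seq gT) : Prop := 1 \in seqpi S.

(* S ~ S' : the congruence defining the class semigroup C(B(G),F(G)). *)
Definition seqsim (gT : finGroupType) (S S' : seq gT) : Prop :=
  forall T : seq gT, inB (S ++ T) <-> inB (S' ++ T).

Definition seqOver (gT : finGroupType) (G0 : {set gT}) (S : seq gT) : bool :=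
  all (fun x => x \in G0) S.

Definition supp (gT : finGroupType) (S : seq gT) : {set gT} := [set x in S].

(* Two descriptions of pi drive everything. Bringing a term y to the front,
   pi(y.T) is the set of products p(a) y p(b) over the splittings T ~ a.b of
   T; for central y this is just y pi(T). And since G/G' is abelian, pi(S)
   lies in the single coset p(S) G' of the product p(S) of S.
   (1) S.g^-1 is a zero-sum sequence exactly when g is in pi(S), so S ~ S'
   gives pi(S) = pi(S').
   (2a) A central S has pi(S) = {p(S)} and pi(S.T) = p(S) pi(T).
   (2b) If pi(S) = gG', then 1 lies in pi(S.T) iff g p(T) lies in G', a
   condition depending on pi(S) only.
   (5) If pi(S) is a singleton, comparing the orderings x.y.R and y.x.R of S
   shows that any two terms x, y of S commute. *)

From mathcomp Require Import all_boot all_fingroup all_solvable.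
Import GroupScope.

Lemma commute_prod (gT : finGroupType) (x : gT) (s : seq gT) :
  {in s, forall y, commute x y} -> commute x (\prod_(y <- s) y).
Proof.
move=> xs; rewrite big_seq.
by apply: (big_ind (commute x)); [exact: commute1|exact: commuteM|exact: xs].
Qed.

Lemma perm_prod_commute {gT : finGroupType} {s t : seq gT} :
  {in s &, forall x y, commute x y} -> perm_eq s t ->
  \prod_(x <- s) x = \prod_(x <- t) x.
Proof.
elim: s t => [|x s IHs] t cs; first by rewrite perm_sym => /perm_nilP ->.
move=> st; have xt : x \in t by rewrite -(perm_mem st) mem_head.
move: st; case/splitPr: xt => a b st.
have s_ab : perm_eq s (a ++ b).
  rewrite -(perm_cons x); apply: perm_trans st _.
  by apply/permPl; exact: perm_catCA a [:: x] b.
have x_a : commute x (\prod_(y <- a) y).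
  apply: commute_prod => y ya; apply: cs; first exact: mem_head.
  by rewrite inE (perm_mem s_ab) mem_cat ya orbT.
rewrite big_cons (IHs (a ++ b)) //; last first.
  by move=> y z ys zs; apply: cs; rewrite inE ?ys ?zs orbT.
by rewrite !big_cat big_cons /= !mulgA x_a.
Qed.

Section SetOfProducts.

Variable gT : finGroupType.
Implicit Types (S T a b s : seq gT) (g h x y z : gT).

Local Notation G' := [~: [set: gT], [set: gT]].

Lemma mem_seqpi S z :
  reflect (exists2 s, perm_eq s S & \prod_(x <- s) x = z) (z \in seqpi S).
Proof.
rewrite inE; apply: (iffP hasP) => [[s]|[s sS <-]].
  by rewrite mem_permutations => sS /eqP; exists s.
by exists s; rewrite ?mem_permutations.
Qed.

Lemma seqpi_perm S T : perm_eq S T -> seqpi S = seqpi T.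
Proof.
move=> ST; apply/setP => z.
by apply/mem_seqpi/mem_seqpi => -[s sX <-]; exists s;
  rewrite // (perm_trans sX) // perm_sym.
Qed.

Lemma mem_seqpi_cat S T z :
  z \in seqpi S -> z * \prod_(x <- T) x \in seqpi (S ++ T).
Proof.
by case/mem_seqpi => s sS <-; apply/mem_seqpi; exists (s ++ T);
  rewrite ?perm_cat2r ?big_cat.
Qed.

Lemma seqpi_cons y T z :
  reflect (exists a b, perm_eq (a ++ b) T /\
             z = \prod_(x <- a) x * y * \prod_(x <- b) x)
          (z \in seqpi (y :: T)).
Proof.
have split_y a b : perm_eq (a ++ y :: b) (y :: T) = perm_eq (a ++ b) T.
  by rewrite (perm_catCA a [:: y] b) perm_cons.
apply: (iffP (mem_seqpi _ _)) => [[s sT <-]|[a [b [abT ->]]]].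
  have ys : y \in s by rewrite (perm_mem sT) mem_head.
  move: sT; case/splitPr: ys => a b; rewrite split_y => abT.
  by exists a, b; rewrite big_cat big_cons /= mulgA.
exists (a ++ y :: b); first by rewrite split_y.
by rewrite big_cat big_cons /= mulgA.
Qed.

Lemma seqpi_seq1 x : seqpi [:: x] = [set x].
Proof.
apply/setP => z; rewrite in_set1.
apply/seqpi_cons/eqP => [[a [b [/perm_nilP]]]|->].
  by case: a b => [|? ?] [|? ?] // _ ->; rewrite !big_nil /= mulg1 mul1g.
by exists [::], [::]; rewrite !big_nil /= mulg1 mul1g.
Qed.

Lemma inB_catV S g : inB (S ++ [:: g^-1]) <-> g \in seqpi S.
Proof.
split; last by move=> /(mem_seqpi_cat _ [:: g^-1]); rewrite big_seq1 mulgV.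
rewrite /inB (seqpi_perm _ _ (permEl (perm_catC _ _))).
case/seqpi_cons => a [b [abS e1]].
apply/mem_seqpi; exists (b ++ a); first by rewrite perm_catC.
rewrite big_cat /=; apply: (mulIg (g^-1 * \prod_(x <- b) x)).
by rewrite mulKVg -mulgA (mulgA (\prod_(x <- a) x)) -e1 mulg1.
Qed.

Lemma seqsim_seqpi S S' : seqsim S S' -> seqpi S = seqpi S'.
Proof.
by move=> SS'; apply/setP => g; apply/idP/idP => /inB_catV/SS'/inB_catV.
Qed.

Lemma seqsim_seq1 g h : seqsim [:: g] [:: h] -> g = h.
Proof. by move/seqsim_seqpi; rewrite !seqpi_seq1 => /set1_inj. Qed.

Lemma central_commute g x : g \in 'Z([set: gT]) -> commute g x.
Proof. by case/centerP => _ /(_ x (in_setT x)). Qed.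

Lemma central_commute_prod g s :
  g \in 'Z([set: gT]) -> commute g (\prod_(x <- s) x).
Proof. by move=> gZ; apply: commute_prod => x _; apply: central_commute. Qed.

Lemma seqpi_cons_mul_central g y T : g \in 'Z([set: gT]) ->
  seqpi (g * y :: T) = g *: seqpi (y :: T).
Proof.
move=> gZ; apply/setP => z; rewrite mem_lcoset.
apply/seqpi_cons/seqpi_cons => -[a [b [abT e]]]; exists a, b; split => //.
  by rewrite e (mulgA _ g) -(central_commute_prod _ _ gZ) -!mulgA mulKg.
by rewrite -(mulKVg g z) e (mulgA _ g) -(central_commute_prod _ _ gZ) -!mulgA.
Qed.

Lemma seqpi_cons_central g T : g \in 'Z([set: gT]) ->
  seqpi (g :: T) = g *: seqpi T.
Proof.
move=> gZ; rewrite -[g]mulg1 seqpi_cons_mul_central // !mulg1; congr (_ *: _).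
apply/setP => z; apply/seqpi_cons/mem_seqpi => [[a [b [abT ->]]]|[s sT <-]].
  by exists (a ++ b); rewrite // big_cat mulg1.
by exists s, [::]; rewrite cats0 big_nil !mulg1.
Qed.

Lemma seqpi_cat_central S T : seqOver 'Z([set: gT]) S ->
  seqpi (S ++ T) = (\prod_(x <- S) x) *: seqpi T.
Proof.
elim: S => [|g S IHS] /=; first by rewrite big_nil lcoset1.
by case/andP => gZ SZ; rewrite seqpi_cons_central // IHS // big_cons lcosetM.
Qed.

Lemma seqpi_commute S :
  {in S &, forall x y, commute x y} -> seqpi S = [set \prod_(x <- S) x].
Proof.
move=> cS; apply/setP => z; rewrite in_set1.
apply/mem_seqpi/eqP => [[s sS <-]|->].
  by rewrite perm_sym in sS; rewrite (perm_prod_commute cS sS).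
by exists S.
Qed.

Lemma seqsim_central S S' :
  seqOver 'Z([set: gT]) S -> seqOver 'Z([set: gT]) S' ->
  seqpi S = seqpi S' -> seqsim S S'.
Proof.
have commute_central U :
    seqOver 'Z([set: gT]) U -> {in U &, forall x y, commute x y}.
  by move=> UZ x y xU _; apply: central_commute; apply: (allP UZ).
move=> SZ S'Z; rewrite (seqpi_commute _ (commute_central _ SZ)).
rewrite (seqpi_commute _ (commute_central _ S'Z)) => /set1_inj eSS' T.
by rewrite /inB !seqpi_cat_central // eSS'.
Qed.

Lemma seqsim_mul_central g h : g \in 'Z([set: gT]) -> seqsim [:: g; h] [:: g * h].
Proof.
by move=> gZ T; rewrite /inB /= seqpi_cons_central ?seqpi_cons_mul_central.
Qed.

Lemma der1_norm x : x \in 'N(G').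
Proof. exact: subsetP (normal_norm (der_normal 1 [set: gT])) x (in_setT x). Qed.

Lemma coset_der1_commute x y : commute (coset G' x) (coset G' y).
Proof.
have /centsP cGG : abelian ([set: gT] / G') by apply: sub_der1_abelian.
by apply: cGG; apply: mem_quotient; rewrite inE.
Qed.

Lemma coset_der1_prod s :
  coset G' (\prod_(x <- s) x) = \prod_(u <- map (coset G') s) u.
Proof.
rewrite big_map; apply: (morph_prod [morphism of coset G']) => x _.
exact: der1_norm.
Qed.

Lemma coset_der1_seqpi {S z} :
  z \in seqpi S -> coset G' z = coset G' (\prod_(x <- S) x).
Proof.
case/mem_seqpi => s sS <-; rewrite !coset_der1_prod.
apply: perm_prod_commute; last exact: perm_map.
by move=> ? ? /mapP[x _ ->] /mapP[y _ ->]; apply: coset_der1_commute.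
Qed.

Lemma inB_cat_der1_coset S T g : g \in seqpi S -> seqpi S = g *: G' ->
  inB (S ++ T) <-> coset G' (g * \prod_(x <- T) x) = 1.
Proof.
move=> gS eS; have cg := coset_der1_seqpi gS.
have cosetM x y : coset G' (x * y) = coset G' x * coset G' y.
  by rewrite morphM ?der1_norm.
rewrite cosetM cg -cosetM; split.
  by move/coset_der1_seqpi; rewrite morph1 big_cat => <-.
move=> ST1; rewrite /inB -(mulVg (\prod_(x <- T) x)); apply: mem_seqpi_cat.
rewrite eS mem_lcoset -invMg groupV; apply: coset_idr; first exact: der1_norm.
by rewrite cosetM coset_der1_commute cg -cosetM.
Qed.

Lemma seqsim_der1_coset S S' g : g \in seqpi S -> seqpi S = g *: G' ->
  seqpi S = seqpi S' -> seqsim S S'.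
Proof.
move=> gS eS eSS' T.
have gS' : g \in seqpi S' by rewrite -eSS'.
have eS' : seqpi S' = g *: G' by rewrite -eSS'.
exact: iff_trans (inB_cat_der1_coset _ T _ gS eS)
                 (iff_sym (inB_cat_der1_coset _ T _ gS' eS')).
Qed.

Lemma seqpi_card1 S : #|seqpi S| = 1%N <-> abelian <<supp S>>.
Proof.
have gen_supp x : x \in S -> x \in <<supp S>>.
  by move=> xS; apply: mem_gen; rewrite inE.
split=> [/eqP/cards1P[c piS]|/centsP cS]; last first.
  by rewrite seqpi_commute ?cards1 // => x y /gen_supp xS /gen_supp yS; apply: cS.
rewrite abelian_gen; apply/centsP => x; rewrite inE => xS y; rewrite inE => yS.
have [<- //|xy] := eqVneq x y.
set R := rem y (rem x S).
have prodR u v : perm_eq (u :: v :: R) S -> u * v * \prod_(z <- R) z = c.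
  move=> uvS; apply/set1P; rewrite -piS; apply/mem_seqpi.
  by exists (u :: v :: R); rewrite // !big_cons /= mulgA.
have xyS : perm_eq (x :: y :: R) S.
  rewrite perm_sym (perm_trans (perm_to_rem xS)) // perm_cons perm_to_rem //.
  by rewrite rem_mem // eq_sym.
have yxS : perm_eq (y :: x :: R) S.
  by apply: perm_trans xyS; apply/permPl; exact: perm_catCA [:: y] [:: x] R.
by apply: (mulIg (\prod_(z <- R) z)); rewrite !prodR.
Qed.

End SetOfProducts.

Theorem lemma3p6 (gT : finGroupType) (S : seq gT) :
  (* (1) *)
  (forall S' : seq gT, seqsim S S' -> seqpi S = seqpi S') /\
  (* (2) *)
  (forall S' : seq gT,
     (seqOver 'Z([set: gT]) S /\ seqOver 'Z([set: gT]) S') \/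
     (exists2 g, g \in seqpi S & seqpi S = g *: [~: [set: gT], [set: gT]]) ->
     (seqsim S S' <-> seqpi S = seqpi S')) /\
  (* (3) *)
  ((forall g h : gT, g != h -> ~ seqsim [:: g] [:: h]) /\
   (* |G| <= |C(B(G),F(G))| : an injection from G into the set of classes *)
   (exists f : gT -> seq gT, forall g h : gT, seqsim (f g) (f h) -> g = h)) /\
  (* (4) *)
  (forall g h : gT, g \in 'Z([set: gT]) -> seqsim [:: g; h] [:: g * h]) /\
  (* (5) *)
  (#|seqpi S| = 1%N <-> abelian <<supp S>>).
Proof.
split; first exact: seqsim_seqpi.
split.
  move=> S' hyp; split; first exact: seqsim_seqpi.
  case: hyp => [[SZ S'Z]|[g gS eS]]; first exact: seqsim_central.
  exact: seqsim_der1_coset gS eS.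
split.
  split; last by exists (fun g => [:: g]); apply: seqsim_seq1.
  by move=> g h /eqP gh /seqsim_seq1.
split; first exact: seqsim_mul_central.
exact: seqpi_card1.
Qed.
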